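(* Fix $w,z\in S_n$ and let $\mathcal{L}=\{x\in C_z^\vee:\kappa(x)\ge\kappa(w)\}$. If $x,y\in\mathcal{L}$, then $x\cap y\in\mathcal{L}$ and $x\cup y\in\mathcal{L}$.
   Context: Permutations are in one-line notation. For $x\in S_n$: inversion table $\iota_k(x)=\#\{i<x^{-1}(k):x(i)>k\}$; code $\kappa_k(x)=\#\{i<x(k):x^{-1}(i)>k\}$. A permutation is determined by its inversion table, and a sequence $(c_1,\dots,c_n)$ is an inversion table iff $0\le c_k\le n-k$. Vectors are compared componentwise; the inversion table order on $S_n$ is $x\le y$ iff $\iota(x)\le\iota(y)$. For $x,y\in S_n$, $x\cap y$ and $x\cup y$ are the permutations with inversion tables the componentwise minimum and maximum of $\iota(x)$ and $\iota(y)$. For $z\in S_n$, $C_z^\vee$ is the Boolean sublattice of the inversion table order generated by the elements covered by $z$, namely the set of $x\in S_n$ with $\iota_k(z)-1\le\iota_k(x)\le\iota_k(z)$ for all $k$. *)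

(* Permutations of {0,...,n-1} as {perm 'I_n}; paper's values
   1..n are shifted to 0..n-1 (k in the paper = k+1 here). *)
From mathcomp Require Import all_boot all_order all_fingroup.
Set Implicit Arguments. Unset Strict Implicit. Unset Printing Implicit Defensive.

Definition invtab n (x : {perm 'I_n}) (k : 'I_n) : nat :=
  #|[set i : 'I_n | (i < (x^-1)%g k) && (k < x i)]|.

Definition code n (x : {perm 'I_n}) (k : 'I_n) : nat :=
  #|[set i : 'I_n | (i < x k) && (k < (x^-1)%g i)]|.

(* the permutation with a given inversion table (identity if none exists) *)
Definition perm_of_invtab n (c : 'I_n -> nat) : {perm 'I_n} :=
  odflt 1%g [pick u : {perm 'I_n} | [forall k, invtab u k == c k]].

Definition pcap n (x y : {perm 'I_n}) : {perm 'I_n} :=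
  perm_of_invtab (fun k => minn (invtab x k) (invtab y k)).
Definition pcup n (x y : {perm 'I_n}) : {perm 'I_n} :=
  perm_of_invtab (fun k => maxn (invtab x k) (invtab y k)).

Definition Cvee n (z x : {perm 'I_n}) : Prop :=
  forall k, invtab z k - 1 <= invtab x k <= invtab z k.

Definition inL n (w z x : {perm 'I_n}) : Prop :=
  Cvee z x /\ forall k, code w k <= code x k.

(* Deleting the smallest value 0 from the one-line notation of x, where it sits
   at position iota_0(x), leaves a permutation of the other values with inversion
   table (iota_1(x), ..., iota_(n-1)(x)).  Putting 0 back shows that the code is
   a function of the inversion table: the entries before the insertion point
   grow by 1, the entry at that point is 0 and the later ones move one step to
   the right ([insert_code]).  Along this recursion, an induction shows that if
   two inversion tables differ by at most 1 in every entry, as any two elements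
   of C_z^vee do, then every table lying componentwise between them, such as
   their minimum and their maximum, has a code at least the componentwise
   minimum of the two codes.  Since the minimum and maximum of two inversion
   tables are again inversion tables and stay within C_z^vee, the claim
   follows. *)

From mathcomp Require Import all_boot all_order all_fingroup zify.
Set Implicit Arguments. Unset Strict Implicit. Unset Printing Implicit Defensive.

Fixpoint seq_invtab (s : seq nat) (k : nat) : nat :=
  if s is u :: s' then (if u == k then 0 else (k < u) + seq_invtab s' k) else 0.

Fixpoint seq_code (s : seq nat) (p : nat) : nat :=
  match s, p with
  | [::], _ => 0
  | u :: s', 0 => count (fun v => v < u) s'
  | _ :: s', p'.+1 => seq_code s' p'
  end.

Definition insert_at T (x : T) (c : nat) (s : seq T) := take c s ++ x :: drop c s.

Definition shift (s : seq nat) := map succn s.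

Lemma perm_insert_at (T : eqType) (x : T) c s : perm_eq (insert_at x c s) (x :: s).
Proof. by rewrite /insert_at -cat1s perm_catCA /= perm_cons cat_take_drop. Qed.

Lemma shift_iota n : iota 1 n = shift (iota 0 n).
Proof. by rewrite /shift -[1]/(1 + 0) iotaDl. Qed.

Lemma seq_invtab_shift s k : seq_invtab (shift s) k.+1 = seq_invtab s k.
Proof. by elim: s => //= u s ->; rewrite eqSS ltnS. Qed.

Lemma seq_code_shift s p : seq_code (shift s) p = seq_code s p.
Proof. by elim: s p => [|u s IH] [|p] //=; rewrite count_map. Qed.

Lemma seq_invtab_insert0 c s : c <= size s -> seq_invtab (insert_at 0 c (shift s)) 0 = c.
Proof. by elim: c s => [|c IH] [|u s] //= cs; rewrite IH. Qed.

Lemma seq_invtab_insert0S c s k :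
  seq_invtab (insert_at 0 c (shift s)) k.+1 = seq_invtab s k.
Proof.
by elim: c s => [|c IH] [|u s] //=; rewrite ?seq_invtab_shift ?IH ?eqSS ?ltnS.
Qed.

Definition insert_code (c : nat) (v : nat -> nat) (p : nat) : nat :=
  if p < c then (v p).+1 else if p == c then 0 else v p.-1.

Lemma seq_code_insert0 c s p :
  c <= size s -> seq_code (insert_at 0 c (shift s)) p = insert_code c (seq_code s) p.
Proof.
rewrite /insert_code; elim: c s p => [|c IH] [|u s] [|p] //= cs.
- by elim: s {cs} => //= v s ->; rewrite ltn0.
- by case: p => [|p]; rewrite ?count_map ?seq_code_shift.
- by have /seq.permP -> := perm_insert_at 0 c (shift s); rewrite /= count_map.
- by rewrite IH // ltnS eqSS; case: p => //; case: c {IH cs}.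
Qed.

Lemma perm_iota_insert0 n s : perm_eq s (iota 0 n.+1) ->
  exists c t, [/\ c <= n, perm_eq t (iota 0 n) & s = insert_at 0 c (shift t)].
Proof.
move=> ps; have s0 : 0 \in s by rewrite (perm_mem ps).
move: ps; case/splitPr: s0 => p1 p2 ps.
have pl : perm_eq (p1 ++ p2) (shift (iota 0 n)).
  by rewrite -shift_iota -(perm_cons 0) -(perm_catCA p1 [:: 0] p2).
have shiftK : shift (map predn (p1 ++ p2)) = p1 ++ p2.
  by rewrite /shift -map_comp map_id_in // => v; rewrite (perm_mem pl) => /mapP [u _ ->].
exists (size p1), (map predn (p1 ++ p2)); split.
- by have := perm_size pl; rewrite size_cat size_map size_iota => <-; apply: leq_addr.
- by have := perm_map predn pl; rewrite /shift -map_comp map_id.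
- by rewrite shiftK /insert_at take_size_cat // drop_size_cat.
Qed.

Fixpoint code_of_invtab n (a : nat -> nat) : nat -> nat :=
  if n is n'.+1 then insert_code (a 0) (code_of_invtab n' (fun k => a k.+1))
  else fun _ => 0.

Definition is_invtab n (a : nat -> nat) := forall k, k < n -> a k < n - k.

Lemma eq_code_of_invtab n a b :
  (forall k, k < n -> a k = b k) -> code_of_invtab n a =1 code_of_invtab n b.
Proof.
elim: n a b => [|n IH] a b ab p //=.
by rewrite /insert_code ab // !(IH _ (fun k => b k.+1)) // => k kn; apply: ab.
Qed.

Lemma seq_code_invtab n s :
  perm_eq s (iota 0 n) -> seq_code s =1 code_of_invtab n (seq_invtab s).
Proof.
elim: n s => [|n IH] s ps; first by move: ps => /perm_nilP ->.
have [c [t [cn pt ->]]] := perm_iota_insert0 ps.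
have st : size t = n by rewrite (perm_size pt) size_iota.
have E : code_of_invtab n (seq_invtab t) =1
         code_of_invtab n (fun k => seq_invtab (insert_at 0 c (shift t)) k.+1).
  by apply: eq_code_of_invtab => k _; rewrite seq_invtab_insert0S.
move=> p /=; rewrite seq_code_insert0 ?st // seq_invtab_insert0 ?st //.
by rewrite /insert_code !(IH t pt) !E.
Qed.

Lemma is_invtab_seq_invtab n s : perm_eq s (iota 0 n) -> is_invtab n (seq_invtab s).
Proof.
elim: n s => [|n IH] s ps //.
have [c [t [cn pt ->]]] := perm_iota_insert0 ps.
have st : size t = n by rewrite (perm_size pt) size_iota.
case=> [|k] kn; first by rewrite seq_invtab_insert0 ?st // subn0 ltnS.
by rewrite seq_invtab_insert0S subSS; apply: IH.
Qed.

Fixpoint seq_of_invtab n (a : nat -> nat) : seq nat :=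
  if n is n'.+1 then insert_at 0 (a 0) (shift (seq_of_invtab n' (fun k => a k.+1)))
  else [::].

Lemma perm_seq_of_invtab n a : perm_eq (seq_of_invtab n a) (iota 0 n).
Proof.
elim: n a => //= n IH a; apply: perm_trans (perm_insert_at _ _ _) _.
by rewrite /= perm_cons shift_iota perm_map.
Qed.

Lemma seq_invtab_of_invtab n a :
  is_invtab n a -> forall k, k < n -> seq_invtab (seq_of_invtab n a) k = a k.
Proof.
elim: n a => // n IH a ha [|k] kn /=.
  by rewrite seq_invtab_insert0 // (perm_size (perm_seq_of_invtab _ _)) size_iota -ltnS ha.
rewrite seq_invtab_insert0S IH // => j jn.
by have := ha j.+1 jn; rewrite subSS.
Qed.

Lemma insert_code_between c d e u v w p :
  maxn c d <= (minn c d).+1 -> minn c d <= e <= maxn c d ->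
  (forall q, minn (u q) (v q) <= w q) ->
  minn (insert_code c u p) (insert_code d v p) <= insert_code e w p.
Proof.
move=> cd ecd uvw; have := uvw p; have := uvw p.-1; rewrite /insert_code.
by case: (ltnP p c); case: (ltnP p d); case: (ltnP p e); do ?case: eqP; lia.
Qed.

Lemma code_of_invtab_between n a b e :
  (forall k, k < n -> maxn (a k) (b k) <= (minn (a k) (b k)).+1) ->
  (forall k, k < n -> minn (a k) (b k) <= e k <= maxn (a k) (b k)) ->
  forall p, minn (code_of_invtab n a p) (code_of_invtab n b p) <= code_of_invtab n e p.
Proof.
elim: n a b e => // n IH a b e ab eab p /=.
apply: insert_code_between; [exact: ab | exact: eab | move=> q].
by apply: IH => k kn; [exact: ab | exact: eab].
Qed.

Lemma count_sum_nth P s : count P s = \sum_(i < size s) P (nth 0 s i).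
Proof. by elim: s => [|u s IH] /=; rewrite ?big_ord0 // big_ord_recl IH. Qed.

Lemma seq_invtab_sum s k :
  seq_invtab s k = \sum_(i < size s) ((i < index k s) && (k < nth 0 s i)).
Proof.
elim: s => [|u s IH] /=; first by rewrite big_ord0.
by rewrite big_ord_recl /=; case: eqP => _ /=; [rewrite big1 | rewrite IH].
Qed.

Lemma seq_code_sum s p :
  seq_code s p = \sum_(i < size s) ((p < i) && (nth 0 s i < nth 0 s p)).
Proof.
elim: s p => [|u s IH] [|p] /=; rewrite ?big_ord0 // big_ord_recl /=.
  by rewrite count_sum_nth.
by rewrite IH.
Qed.

Lemma card_set_sum (T : finType) (P : pred T) : #|[set i | P i]| = \sum_i P i.
Proof. by rewrite -sum1dep_card big_mkcond; apply: eq_bigr => i _; case: (P i). Qed.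

Definition oneline n (x : {perm 'I_n}) : seq nat := [seq val (x i) | i <- enum 'I_n].

Lemma size_oneline n (x : {perm 'I_n}) : size (oneline x) = n.
Proof. by rewrite size_map size_enum_ord. Qed.

Lemma nth_oneline n (x : {perm 'I_n}) (i : 'I_n) : nth 0 (oneline x) i = x i.
Proof. by rewrite (nth_map i) ?size_enum_ord // nth_ord_enum. Qed.

Lemma perm_oneline n (x : {perm 'I_n}) : perm_eq (oneline x) (iota 0 n).
Proof.
rewrite /oneline map_comp -val_enum_ord perm_map // uniq_perm ?enum_uniq //.
  by rewrite map_inj_uniq ?enum_uniq //; apply: perm_inj.
by move=> i; rewrite mem_enum; apply/mapP; exists (x^-1 i)%g; rewrite ?mem_enum ?permKV.
Qed.

Lemma invtab_oneline n (x : {perm 'I_n}) k : invtab x k = seq_invtab (oneline x) k.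
Proof.
have kx : index (val k) (oneline x) = (x^-1 k)%g.
  have := @index_uniq _ 0 (x^-1 k)%g (oneline x).
  by rewrite size_oneline nth_oneline permKV (perm_uniq (perm_oneline x)) iota_uniq; apply.
rewrite /invtab card_set_sum seq_invtab_sum size_oneline kx.
by apply: eq_bigr => i _; rewrite nth_oneline.
Qed.

Lemma code_oneline n (x : {perm 'I_n}) p : code x p = seq_code (oneline x) p.
Proof.
rewrite /code card_set_sum seq_code_sum size_oneline (reindex_inj (@perm_inj _ x)) /=.
by apply: eq_bigr => i _; rewrite !nth_oneline permK andbC.
Qed.

Lemma oneline_surj n s : perm_eq s (iota 0 n) -> exists u : {perm 'I_n}, oneline u = s.
Proof.
move=> ps; have us : uniq s by rewrite (perm_uniq ps) iota_uniq.
have ss : size s = n by rewrite (perm_size ps) size_iota.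
have sn (i : 'I_n) : nth 0 s i < n.
  have : nth 0 s i \in s by rewrite mem_nth ?ss.
  by rewrite (perm_mem ps) mem_iota.
have f_inj : injective (fun i => Ordinal (sn i)).
  by move=> i j /(congr1 val) /= /eqP; rewrite nth_uniq ?ss // => /eqP /val_inj.
exists (perm f_inj); rewrite -[RHS](mkseq_nth 0) ss /mkseq -val_enum_ord -map_comp.
by apply: eq_map => i; rewrite permE.
Qed.

Lemma invtab_perm_of_invtab n (c : 'I_n -> nat) :
  (forall k : 'I_n, c k < n - k) -> forall k, invtab (perm_of_invtab c) k = c k.
Proof.
move=> hc; pose a k := if insub k is Some o then c o else 0.
have ha : is_invtab n a.
  by move=> k kn; rewrite /a; case: insubP => [o _ <-|]; [apply: hc | rewrite kn].
have [u su] := oneline_surj (perm_seq_of_invtab n a).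
have uc k : invtab u k = c k.
  by rewrite invtab_oneline su seq_invtab_of_invtab // /a valK.
rewrite /perm_of_invtab; case: pickP => [v /forallP vc k | /(_ u) /forallP []].
  exact/eqP/vc.
by move=> k; rewrite uc.
Qed.

Lemma invtab_lt n (x : {perm 'I_n}) (k : 'I_n) : invtab x k < n - k.
Proof. by rewrite invtab_oneline; apply: is_invtab_seq_invtab (perm_oneline x) _ _. Qed.

Lemma invtab_pcap n (x y : {perm 'I_n}) k :
  invtab (pcap x y) k = minn (invtab x k) (invtab y k).
Proof. by apply: invtab_perm_of_invtab => j; rewrite gtn_min invtab_lt. Qed.

Lemma invtab_pcup n (x y : {perm 'I_n}) k :
  invtab (pcup x y) k = maxn (invtab x k) (invtab y k).
Proof. by apply: invtab_perm_of_invtab => j; rewrite gtn_max !invtab_lt. Qed.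

Lemma code_between n (x y v : {perm 'I_n}) :
  (forall k, maxn (invtab x k) (invtab y k) <= (minn (invtab x k) (invtab y k)).+1) ->
  (forall k, minn (invtab x k) (invtab y k) <= invtab v k <= maxn (invtab x k) (invtab y k)) ->
  forall p, minn (code x p) (code y p) <= code v p.
Proof.
move=> adj btw p; rewrite !code_oneline !(seq_code_invtab (perm_oneline _)).
apply: code_of_invtab_between => k kn.
  by have := adj (Ordinal kn); rewrite !invtab_oneline.
by have := btw (Ordinal kn); rewrite !invtab_oneline.
Qed.

Section Cvee.
Variables (n : nat) (z x y : {perm 'I_n}).
Hypotheses (Cx : Cvee z x) (Cy : Cvee z y).

Lemma Cvee_adjacent k :
  maxn (invtab x k) (invtab y k) <= (minn (invtab x k) (invtab y k)).+1.
Proof. by have := Cx k; have := Cy k; lia. Qed.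

Lemma Cvee_pcap : Cvee z (pcap x y).
Proof. by move=> k; rewrite invtab_pcap; have := Cx k; have := Cy k; lia. Qed.

Lemma Cvee_pcup : Cvee z (pcup x y).
Proof. by move=> k; rewrite invtab_pcup; have := Cx k; have := Cy k; lia. Qed.

End Cvee.

Theorem lemma5p2 (n : nat) (w z x y : {perm 'I_n}) :
  inL w z x -> inL w z y -> inL w z (pcap x y) /\ inL w z (pcup x y).
Proof.
move=> [Cx Kx] [Cy Ky].
have code_w p : code w p <= minn (code x p) (code y p) by rewrite leq_min Kx Ky.
have code_ge v :
    (forall k, minn (invtab x k) (invtab y k) <= invtab v k <= maxn (invtab x k) (invtab y k)) ->
    forall p, code w p <= code v p.
  by move=> btw p; apply: leq_trans (code_w p) (code_between (Cvee_adjacent Cx Cy) btw p).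
split; split; [exact: Cvee_pcap | | exact: Cvee_pcup |]; apply: code_ge => k.
  by rewrite invtab_pcap; lia.
by rewrite invtab_pcup; lia.
Qed.
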